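(* Let $K$ be a commutative ring of characteristic $0$ with unit and $M$ a multiplicative $\mathbb{R}$-vector subspace of $\mathcal{H}^{>0}$. Let $F$ be an $M$-generalized power series over $K$ with generating monomials $m_0<\dots<m_k$. Let $l\in\mathbb{N}$ and assume that $\{m_0,\dots,m_k\}$ has $l+1$ distinct comparability classes. Then $\operatorname{supp}(F)$ has reverse-order type at most $\omega^{l+1}$ (that is, $\operatorname{supp}(F)$ ordered by $>$ is a well-order of order type at most $\omega^{l+1}$).
   Context: $\mathcal{H}$ is the Hardy field of germs at $+\infty$ of unary functions definable in $\mathbb{R}_{\mathrm{an},\exp}$, totally ordered by eventual comparison. Germs $f,g$ are comparable if there are $r,s>0$ with $|f|^r<|g|<|f|^s$ eventually; this is an equivalence relation, whose classes are the comparability classes. An $M$-generalized power series over $K$ with generating monomials $m_0,\dots,m_k$ is a series $G(m_0,\dots,m_k)=\sum_{n\in M}\big(\sum_{\alpha\in\operatorname{supp}G,\,m^\alpha=n}a_\alpha\big)n$ in the ring $K((M))$ of formal series with anti-well-ordered support, where $m_0,\dots,m_k\in M$ are small (tend to $0$) and $G=\sum_\alpha a_\alpha X^\alpha$ is a generalized power series over $K$ in $X_0,\dots,X_k$ (support in a product of well-ordered subsets of $[0,\infty)$) with natural support (for each $a>0$ and each $i$, $[0,a)\cap\Pi_i(\operatorname{supp}G)$ is finite). *)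

From Stdlib Require Import Reals List.
From mathcomp Require Import all_boot all_algebra.

Set Implicit Arguments.
Unset Strict Implicit.
Unset Printing Implicit Defensive.

Local Open Scope R_scope.

(* Restricted analytic functions (van den Dries-Macintyre-Marker):     *)
(* a power series in n variables, centred at 0, converging (absolutely) *)
(* on a neighbourhood of [-1,1]^n; the function equals the series on    *)
(* [-1,1]^n and is 0 outside.                                           *)

Fixpoint sumN (N : nat) (h : nat -> R) : R :=
  match N with O => 0 | S N' => sumN N' h + h N' end.

Fixpoint box_sum (n N : nat) (g : list nat -> R) : R :=
  match n with
  | O => g nil
  | S n' => sumN N (fun i => box_sum n' N (fun al => g (i :: al)))
  end.

Fixpoint mono (xs : list R) (al : list nat) : R :=
  match xs, al with
  | x :: xs', a :: al' => x ^ a * mono xs' al'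
  | _, _ => 1
  end.

Definition deg (al : list nat) : nat := List.fold_right Nat.add O al.

Record ranfun := RanFun {
  ra_arity : nat;
  ra_coef : list nat -> R;
  ra_conv : exists r, 1 < r /\ exists B, forall N,
      box_sum ra_arity N (fun al => Rabs (ra_coef al) * r ^ deg al) <= B
}.

Definition ra_graph (f : ranfun) (xs : list R) (y : R) : Prop :=
  let inbox := List.length xs = ra_arity f /\
               List.Forall (fun x => Rabs x <= 1) xs in
  (inbox /\ Un_cv (fun N => box_sum (ra_arity f) N
                              (fun al => ra_coef f al * mono xs al)) y)
  \/ (~ inbox /\ y = 0).

(* First-order formulas of the language of R_an,exp (relational form:  *)
(* <, =, constants (parameters), graphs of +, *, -, exp and of every    *)
(* restricted analytic function), variables indexed by nat.            *)

Inductive formula : Type :=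
| FLt (i j : nat)
| FEq (i j : nat)
| FConst (i : nat) (r : R)
| FAdd (i j k : nat)
| FMul (i j k : nat)
| FNeg (i j : nat)
| FExp (i j : nat)
| FRan (f : ranfun) (i : nat) (js : list nat)
| FNot (p : formula)
| FAnd (p q : formula)
| FOr (p q : formula)
| FEx (i : nat) (p : formula).

Definition upd (e : nat -> R) (i : nat) (r : R) : nat -> R :=
  fun j => if Nat.eqb j i then r else e j.

Fixpoint sat (e : nat -> R) (p : formula) : Prop :=
  match p with
  | FLt i j => e i < e j
  | FEq i j => e i = e j
  | FConst i r => e i = r
  | FAdd i j k => e i = e j + e k
  | FMul i j k => e i = e j * e k
  | FNeg i j => e i = - e j
  | FExp i j => e i = exp (e j)
  | FRan f i js => ra_graph f (List.map e js) (e i)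
  | FNot p => ~ sat e p
  | FAnd p q => sat e p /\ sat e q
  | FOr p q => sat e p \/ sat e q
  | FEx i p => exists r, sat (upd e i r) p
  end.

(* Germs at +oo.  A germ is represented by any function R -> R; all    *)
(* notions below only depend on the values on some tail (a, +oo).      *)

Definition evt (P : R -> Prop) : Prop := exists a, forall x, a < x -> P x.

(* f (restricted to some tail) has a graph definable in R_an,exp with
   parameters: f represents an element of the Hardy field H *)
Definition definable_germ (f : R -> R) : Prop :=
  exists (p : formula) (a : R), forall (e : nat -> R) (x y : R),
    a < x -> (sat (upd (upd e 0 x) 1 y) p <-> y = f x).

(* M is a multiplicative R-vector subspace of H^{>0}: a set of germs
   (closed under eventual equality) of positive definable functions,
   containing 1, closed under products and real powers f |-> f^r *)
Definition mult_vsubspace (M : (R -> R) -> Prop) : Prop :=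
  (forall f, M f -> definable_germ f /\ evt (fun x => 0 < f x)) /\
  (forall f g, M f -> evt (fun x => f x = g x) -> M g) /\
  M (fun _ => 1) /\
  (forall f g, M f -> M g -> M (fun x => f x * g x)) /\
  (forall f r, M f -> M (fun x => Rpower (f x) r)).

Definition small (f : R -> R) : Prop :=
  forall eps, 0 < eps -> evt (fun x => Rabs (f x) < eps).

Definition comparable (f g : R -> R) : Prop :=
  exists r s, 0 < r /\ 0 < s /\
    evt (fun x => Rpower (Rabs (f x)) r < Rabs (g x) /\
                  Rabs (g x) < Rpower (Rabs (f x)) s).

Definition gen_monomials (M : (R -> R) -> Prop) (k : nat)
    (m : nat -> R -> R) : Prop :=
  (forall i, (i <= k)%nat -> M (m i) /\ small (m i)) /\
  (forall i, (i < k)%nat -> evt (fun x => m i x < m (S i) x)).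

Definition num_comp_classes (k : nat) (m : nat -> R -> R) (c : nat) : Prop :=
  exists cl : nat -> nat,
    (forall i, (i <= k)%nat -> (cl i < c)%nat) /\
    (forall j, (j < c)%nat -> exists i, (i <= k)%nat /\ cl i = j) /\
    (forall i j, (i <= k)%nat -> (j <= k)%nat ->
       (comparable (m i) (m j) <-> cl i = cl j)).

Fixpoint mpow (m : nat -> R -> R) (i : nat) (al : list R) (x : R) : R :=
  match al with
  | nil => 1
  | a :: al' => Rpower (m i x) a * mpow m (S i) al' x
  end.

Definition well_ordered_R (W : R -> Prop) : Prop :=
  forall S : R -> Prop, (forall x, S x -> W x) -> (exists x, S x) ->
    exists x, S x /\ forall y, S y -> x <= y.

(* Generalized power series over K in X_0..X_k: G a = coefficient of   *)
(* X^a, exponents a : list R of length k+1.                            *)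

Definition char0 (K : comNzRingType) : Prop :=
  forall n : nat, (GRing.natmul (@GRing.one K) n.+1) <> @GRing.zero K.

Definition gen_power_series (K : comNzRingType) (k : nat) (G : list R -> K)
  : Prop :=
  exists W : nat -> R -> Prop,
    (forall i, (i <= k)%nat ->
        well_ordered_R (W i) /\ forall x, W i x -> 0 <= x) /\
    (forall al, G al <> @GRing.zero K ->
        List.length al = S k /\
        forall i, (i <= k)%nat -> W i (List.nth i al 0)).

Definition natural_support (K : comNzRingType) (k : nat) (G : list R -> K)
  : Prop :=
  forall a, 0 < a -> forall i, (i <= k)%nat ->
    exists L : list R, forall al, G al <> @GRing.zero K ->
      List.nth i al 0 < a -> List.In (List.nth i al 0) L.

Definition ksum (K : comNzRingType) (G : list R -> K) (s : list (list R)) : K :=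
  List.fold_right (fun al acc => GRing.add (G al) acc) (@GRing.zero K) s.

(* n belongs to supp G(m_0,...,m_k): n in M and the (finite) sum of the
   a_alpha over {alpha in supp G | m^alpha = n} is nonzero *)
Definition in_supp (K : comNzRingType) (M : (R -> R) -> Prop)
    (m : nat -> R -> R) (G : list R -> K) (n : R -> R) : Prop :=
  M n /\
  exists s : list (list R),
    List.NoDup s /\
    (forall al, List.In al s <->
       (G al <> @GRing.zero K /\ evt (fun x => mpow m 0 al x = n x))) /\
    ksum G s <> @GRing.zero K.

(* strict lexicographic order on nat-tuples (first entry most
   significant); (N^(l+1), lexlt) has order type omega^(l+1) *)
Fixpoint lexlt (s t : list nat) : Prop :=
  match s, t with
  | a :: s', b :: t' => (a < b)%nat \/ (a = b /\ lexlt s' t')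
  | _, _ => False
  end.

(* Writing P i = - ln m_i, which tends to +oo, each monomial is
   m^al = exp (- sum_i al_i P i), so supp F ordered by > embeds into the
   exponents ordered by the germ of sum_i al_i P i.  Comparing these germs
   along an ultrafilter extending the filter at +oo makes the order total
   without appealing to o-minimality.  Comparable monomials have P i of the
   same order, and we induct on the number of classes: let P d dominate and D
   be its class.  The standard part of (sum_(i in D) al_i P i) / P d is
   monotone, and its ceiling cuts the exponents into omega levels.  On a level
   the D-coordinates are bounded, so by natural support they take finitely many
   values, and on each such fibre the order is decided by the fewer remaining
   classes.  A finite union of sets of order type below omega^c * B is again of
   this form (use natural sums), and omega such levels have order type at most
   omega^(c+1). *)

From Pilot Require Import Defs.
From Stdlib Require Import Reals List.
From mathcomp Require Import all_boot all_algebra.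
From Stdlib Require Import Lia Lra ZArith ClassicalEpsilon.
From mathcomp Require Import zify.
From mathcomp Require boolp classical_sets filter.

Set Implicit Arguments.
Unset Strict Implicit.
Unset Printing Implicit Defensive.

Delimit Scope nat_scope with N.

Lemma lexlt_trans s t u : lexlt s t -> lexlt t u -> lexlt s u.
Proof.
elim: s t u => [|a s IH] [|b t] [|c u] //= [ab|[<- st]] [bc|[<- tu]].
- by left; apply: ltn_trans bc.
- by left.
- by left.
- by right; split; last exact: IH tu.
Qed.

Lemma lexlt_total s t :
  length s = length t -> [\/ s = t, lexlt s t | lexlt t s].
Proof.
elim: s t => [|a s IH] [|b t] //=; first by constructor.
move=> [/IH]; case: (ltngtP a b) => [ab|ba|<-] st; first by constructor 2; left.
  by constructor 3; left.
by case: st => [->|st|ts]; [constructor 1|constructor 2; right|constructor 3; right].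
Qed.

Definition lexle s t := lexlt s t \/ s = t.

Lemma lexle_of_not_lt s t : length s = length t -> ~ lexlt t s -> lexle s t.
Proof. by move=> /lexlt_total [->|st|ts] nts; [right|left|case: nts]. Qed.

Lemma lexle_lt_trans s t u : lexle s t -> lexlt t u -> lexlt s u.
Proof. by case=> [st /(lexlt_trans st)|->]. Qed.

Lemma lexlt_head s b t : s <> nil -> (hd 0 s < b)%N -> lexlt s (b :: t).
Proof. by case: s => // a s _ /= ab; left. Qed.

Lemma nat_least (Q : nat -> Prop) :
  (exists n, Q n) -> exists n, Q n /\ forall m, Q m -> (n <= m)%N.
Proof.
move=> /(dec_inh_nat_subset_has_unique_least_element _ (fun n => classic (Q n))).
by move=> [n [[Qn least] _]]; exists n; split=> // m /least /leP.
Qed.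

Lemma lexlt_least c (Q : list nat -> Prop) :
  (forall s, Q s -> length s = c) -> (exists s, Q s) ->
  exists s, Q s /\ forall t, Q t -> ~ lexlt t s.
Proof.
elim: c Q => [|c IH] Q lenQ [s Qs].
  exists s; split=> // t Qt.
  by have := lenQ t Qt; case: t Qt => //= _ _ [].
have [a [[s0 Qas0] a_least]] :
    exists a, (exists s, Q (a :: s)) /\ forall b, (exists s, Q (b :: s)) -> (a <= b)%N.
  apply: nat_least; have := lenQ s Qs.
  by case: s Qs => // a s Qas _; exists a, s.
have [s1 [Qas1 s1_least]] := IH (fun s => Q (a :: s))
  (fun s Qas => eq_add_S _ _ (lenQ _ Qas)) (ex_intro _ s0 Qas0).
exists (a :: s1); split=> // [[|b t]] Qbt /=; first by have := lenQ _ Qbt.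
case=> [ba|[ab]]; last by subst b; exact: s1_least.
by have := a_least b (ex_intro _ t Qbt); rewrite leqNgt ba.
Qed.

Fixpoint vadd (s t : list nat) : list nat :=
  match s, t with
  | a :: s', b :: t' => (a + b)%N :: vadd s' t'
  | _, _ => nil
  end.

Lemma vaddC s t : vadd s t = vadd t s.
Proof. by elim: s t => [|a s IH] [|b t] //=; rewrite IH addnC. Qed.

Lemma vadd_length s t : length s = length t -> length (vadd s t) = length s.
Proof. by elim: s t => [|a s IH] [|b t] //= [/IH ->]. Qed.

Lemma lexlt_vadd n s t u v :
  length s = n -> length t = n -> length u = n -> length v = n ->
  lexlt s t -> lexle u v -> lexlt (vadd s u) (vadd t v).
Proof.
elim: n s t u v => [|n IH] [|a s] [|b t] [|c u] [|d v] //= [ls] [lt] [lu] [lv].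
case=> [ab|[<- st]] [[cd|[<- uv]]|[<- <-]].
1-4: by left; lia.
- by right; split; last by apply: IH => //; left.
- by right; split; last by apply: IH => //; right.
Qed.

Definition strict_weak_order (T : Type) (lt : T -> T -> Prop) :=
  [/\ forall x, ~ lt x x,
      forall x y z, lt x y -> lt y z -> lt x z &
      forall x y z, lt x y -> lt x z \/ lt z y].

Section LexEmbeddings.

Variables (T : Type) (lt : T -> T -> Prop).

(* [lex_embeds X c]: (X, lt) has order type at most omega^c.
   [lex_embeds_bounded X c]: (X, lt) has order type below omega^c * B for some
   finite B. *)
Definition lex_embeds (X : T -> Prop) (c : nat) :=
  exists phi : T -> list nat,
    (forall x, X x -> length (phi x) = c) /\
    (forall x y, X x -> X y -> lt x y -> lexlt (phi x) (phi y)).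

Definition lex_embeds_bounded (X : T -> Prop) (c : nat) :=
  exists (phi : T -> list nat) (B : nat),
    (forall x, X x -> length (phi x) = c.+1 /\ (hd 0 (phi x) < B)%N) /\
    (forall x y, X x -> X y -> lt x y -> lexlt (phi x) (phi y)).

Lemma lex_embeds_bounded_of X c : lex_embeds X c -> lex_embeds_bounded X c.
Proof.
move=> [phi [phi_len phi_lt]]; exists (fun x => 0%N :: phi x), 1%N.
split=> [x Xx|x y Xx Xy xy] /=; first by rewrite phi_len.
by right; split; last exact: phi_lt.
Qed.

Hypothesis lt_swo : strict_weak_order lt.

(* [f x] is the least value of [phi] on the points of [A] not below [x], and
   [B :: 0 ... 0] if there are none. *)
Lemma lex_embeds_bounded_extension (A : T -> Prop) c (phi : T -> list nat) B :
  (forall x, A x -> length (phi x) = c.+1 /\ (hd 0 (phi x) < B)%N) ->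
  (forall x y, A x -> A y -> lt x y -> lexlt (phi x) (phi y)) ->
  exists f : T -> list nat,
    [/\ forall x, length (f x) = c.+1 /\ (hd 0 (f x) <= B)%N,
        forall x y, lt x y -> lexle (f x) (f y) &
        forall x y, A x -> lt x y -> lexlt (f x) (f y)].
Proof.
case: lt_swo => lt_irr lt_trans lt_split phiA phi_lt.
pose above x s := exists2 a, A a /\ ~ lt a x & s = phi a.
have above_len x s : above x s -> length s = c.+1.
  by case=> a [Aa _] ->; case: (phiA a Aa).
have above_lt x s t : above x s -> lexlt s (B :: t).
  case=> a [Aa _] ->; have [len hd_lt] := phiA a Aa.
  by apply: lexlt_head hd_lt; case: (phi a) len.
have above_mono x y s : lt x y -> above y s -> above x s.
  by move=> xy [a [Aa ay] ->]; exists a => //; split=> // /lt_trans /(_ xy).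
pose top := B :: List.repeat 0%N c.
have least_above x : exists s,
    (above x s /\ forall t, above x t -> ~ lexlt t s) \/
    ((forall a, A a -> lt a x) /\ s = top).
  have [[a [Aa ax]]|none] := classic (exists a, A a /\ ~ lt a x).
    have xa : above x (phi a) by exists a.
    have [s [xs s_least]] := lexlt_least (@above_len x) (ex_intro _ _ xa).
    by exists s; left.
  exists top; right; split=> // a Aa; apply: NNPP => ax; by apply: none; exists a.
have [f fP] := choice _ least_above.
have f_le_top x : lexle (f x) top.
  by case: (fP x) => [[fx _]|[_ ->]]; [left; apply: above_lt fx|right].
exists f; split.
- move=> x; case: (fP x) => [[fx _]|[_ ->]]; last by rewrite /= List.repeat_length.
  split; first exact: above_len fx.
  by case: fx => a [Aa _] ->; case: (phiA a Aa) => _ /ltnW.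
- move=> x y xy; case: (fP y) => [[fy _]|[_ ->]]; last exact: f_le_top.
  case: (fP x) => [[fx fx_least]|[below _]].
    apply: lexle_of_not_lt; last exact: fx_least (above_mono _ _ _ xy fy).
    by rewrite (above_len _ _ fx) (above_len _ _ fy).
  by case: fy => a [Aa ay] _; case: ay; apply: lt_trans (below a Aa) xy.
- move=> x y Ax xy.
  have fx_le : lexle (f x) (phi x).
    case: (fP x) => [[fx fx_least]|[below _]]; last by case: (lt_irr _ (below x Ax)).
    have x_above : above x (phi x) by exists x.
    apply: lexle_of_not_lt; last exact: fx_least x_above.
    by rewrite (above_len _ _ fx); case: (phiA x Ax).
  apply: lexle_lt_trans fx_le _.
  case: (fP y) => [[[a [Aa ay] ->] _]|[_ ->]].
    by apply: phi_lt => //; case: (lt_split _ _ a xy).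
  apply: lexlt_head (proj2 (phiA x Ax)).
  by case: (phi x) (proj1 (phiA x Ax)).
Qed.

(* The natural (Hessenberg) sum of the two extensions separates both sets. *)
Lemma lex_embeds_bounded_union X Y Z c :
  (forall x, X x -> Y x \/ Z x) ->
  lex_embeds_bounded Y c -> lex_embeds_bounded Z c -> lex_embeds_bounded X c.
Proof.
move=> XYZ [phiY [BY [phiY_len phiY_lt]]] [phiZ [BZ [phiZ_len phiZ_lt]]].
have [f [f_len f_le f_lt]] := lex_embeds_bounded_extension phiY_len phiY_lt.
have [g [g_len g_le g_lt]] := lex_embeds_bounded_extension phiZ_len phiZ_lt.
exists (fun x => vadd (f x) (g x)), (BY + BZ).+1; split.
  move=> x _; have [fx fx_hd] := f_len x; have [gx gx_hd] := g_len x.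
  split; first by rewrite vadd_length // fx gx.
  move: fx fx_hd gx gx_hd; case: (f x) => // a s _ /= ?.
  by case: (g x) => // b t _ /= ?; lia.
move=> x y Xx Xy xy; have L u := proj1 (f_len u); have L' u := proj1 (g_len u).
case: (XYZ x Xx) => [Yx|Zx].
  by apply: (lexlt_vadd (L x) (L y) (L' x) (L' y)); [apply: f_lt|apply: g_le].
rewrite (vaddC (f x)) (vaddC (f y)).
by apply: (lexlt_vadd (L' x) (L' y) (L x) (L y)); [apply: g_lt|apply: f_le].
Qed.

Lemma lex_embeds_bounded_fibers (Y : Type) X c (g : T -> Y) (C : list Y) :
  (forall y, lex_embeds_bounded (fun x => X x /\ g x = y) c) ->
  (forall x, X x -> List.In (g x) C) -> lex_embeds_bounded X c.
Proof.
move=> fibers XC.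
suff cover D X' : (forall x, X' x -> X x /\ List.In (g x) D) ->
    lex_embeds_bounded X' c.
  by apply: (cover C) => x Xx; split; last exact: XC.
elim: D X' => [|y D IH] X' X'D.
  exists (fun _ => List.repeat 0%N c.+1), 1%N.
  by split=> [x /X'D []|x y' /X'D []].
apply: (lex_embeds_bounded_union _ (fibers y) (IH _ (fun x h => h))).
by move=> x /X'D [Xx [<-|xD]]; [left|right].
Qed.

Lemma lex_embeds_levels X c (lam : T -> nat) :
  (forall x y, X x -> X y -> lt x y -> (lam x <= lam y)%N) ->
  (forall n, lex_embeds_bounded (fun x => X x /\ lam x = n) c) ->
  lex_embeds X c.+1.
Proof.
move=> lam_mono levels.
have [phi phiP] := choice _ levels; have [B phiB] := choice _ phiP.
(* Level [n] is shifted to the heads [offset n, offset n + B n). *)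
pose offset n := (\sum_(i < n) B i)%N.
have offsetS n : offset n.+1 = (offset n + B n)%N by rewrite /offset big_ord_recr.
have offset_lt n n' : (n < n')%N -> (offset n + B n <= offset n')%N.
  by elim: n' => // n' IH; rewrite ltnS leq_eqVlt offsetS => /predU1P [->|/IH]; lia.
exists (fun x => if phi (lam x) x is h :: t then (offset (lam x) + h)%N :: t else nil).
split=> [x Xx|x y Xx Xy xy].
  by case: ((phiB (lam x)).1 x (conj Xx erefl)); case: (phi _ x).
have [len_x hd_x] := (phiB (lam x)).1 x (conj Xx erefl).
have [len_y hd_y] := (phiB (lam y)).1 y (conj Xy erefl).
move: (lam_mono x y Xx Xy xy); rewrite leq_eqVlt => /predU1P [eq_lam|lt_lam].
  have := (phiB (lam x)).2 x y (conj Xx erefl) (conj Xy (esym eq_lam)) xy.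
  rewrite -eq_lam; case: (phi _ x) => [|h t] //; case: (phi _ y) => [|h' t'] //=.
  by case=> [hh|[-> tt]]; [left; lia|right].
have := offset_lt _ _ lt_lam; move: len_x hd_x len_y hd_y.
by case: (phi _ x) => [|h t] //; case: (phi _ y) => [|h' t'] //= _ ? _ ? ?; left; lia.
Qed.

End LexEmbeddings.

Lemma lex_embeds_subrel (T : Type) (lt lt' : T -> T -> Prop) X c :
  (forall x y, X x -> X y -> lt x y -> lt' x y) ->
  lex_embeds lt' X c -> lex_embeds lt X c.
Proof.
move=> sub [phi [phi_len phi_lt]]; exists phi; split=> // x y Xx Xy.
by move/(sub _ _ Xx Xy); exact: phi_lt.
Qed.

Local Open Scope R_scope.

Definition ceil_nat (x : R) : nat := Z.to_nat (up x).

Lemma lt_ceil_nat x : x < INR (ceil_nat x).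
Proof.
have [up_gt _] := archimed x; rewrite /ceil_nat INR_IZR_INZ.
have [up_ge0|up_lt0] := Z.le_gt_cases 0 (up x); first by rewrite Z2Nat.id.
have -> : Z.to_nat (up x) = 0%N by lia.
have := IZR_lt _ _ up_lt0; rewrite /=; lra.
Qed.

Lemma ceil_nat_le x y : x <= y -> (ceil_nat x <= ceil_nat y)%N.
Proof.
move=> xy; suff: (up x <= up y)%Z by rewrite /ceil_nat; lia.
have [x_lt x_le] := archimed x; have [y_lt y_le] := archimed y.
apply/Z.nlt_ge => up_lt; have /IZR_le : (up y <= up x - 1)%Z by lia.
rewrite minus_IZR; lra.
Qed.

Lemma mem_cons_tail (T : eqType) (y x : T) (s : seq T) : x \in s -> x \in y :: s.
Proof. by rewrite inE => ->; rewrite orbT. Qed.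

Section LinearCombination.

Variables (T : Type) (P : nat -> T -> R).

Definition comb (J : seq nat) (al : list R) (x : T) : R :=
  foldr (fun i acc => List.nth i al 0 * P i x + acc) 0 J.

#[global] Arguments comb : simpl never.

Definition coef_sum (J : seq nat) (al : list R) : R :=
  foldr (fun i acc => List.nth i al 0 + acc) 0 J.

Definition coords (J : seq nat) (al : list R) : list R :=
  map (fun i => List.nth i al 0) J.

Lemma comb_cons j J al x : comb (j :: J) al x = List.nth j al 0 * P j x + comb J al x.
Proof. by []. Qed.

Lemma comb_filter (p : pred nat) J al x :
  comb J al x = comb (filter p J) al x + comb (filter (predC p) J) al x.
Proof.
elim: J => [|j J IH] /=; first by rewrite /comb /=; lra.
by case: (p j) => /=; rewrite !comb_cons IH; lra.
Qed.

Lemma comb_ge_term J al x :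
  (forall i, i \in J -> 0 <= List.nth i al 0 /\ 0 <= P i x) ->
  0 <= comb J al x /\ forall i, i \in J -> List.nth i al 0 * P i x <= comb J al x.
Proof.
elim: J => [|j J IH] coef_ge0; first by split=> //; rewrite /comb /=; lra.
have [[aj_ge0 Pj_ge0] [IH_ge0 IH_term]] :=
  (coef_ge0 j (mem_head _ _), IH (fun i iJ => coef_ge0 i (mem_cons_tail _ iJ))).
have := Rmult_le_pos _ _ aj_ge0 Pj_ge0; rewrite comb_cons.
split=> [|i]; first lra.
by rewrite inE => /predU1P [->|/IH_term]; lra.
Qed.

Lemma comb_le_coef_sum J al x y :
  (forall i, i \in J -> 0 <= List.nth i al 0 /\ P i x <= y) ->
  comb J al x <= coef_sum J al * y.
Proof.
elim: J => [|j J IH] coef_ge0; first by rewrite /comb /coef_sum /=; lra.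
have [aj_ge0 Pj_le] := coef_ge0 j (mem_head _ _).
have := IH (fun i iJ => coef_ge0 i (mem_cons_tail _ iJ)).
have := Rmult_le_compat_l _ _ _ aj_ge0 Pj_le.
rewrite comb_cons /coef_sum /= -/(coef_sum J al); lra.
Qed.

Lemma comb_coords J a b x : coords J a = coords J b -> comb J a x = comb J b x.
Proof. by elim: J => [|j J IH] //= [aj /IH]; rewrite !comb_cons aj => ->. Qed.

End LinearCombination.

Lemma comb_shift (T : Type) (P : nat -> T -> R) j n a al x :
  comb P (iota j.+1 n) (a :: al) x = comb (fun i => P i.+1) (iota j n) al x.
Proof. by elim: n j => [|n IH] j //=; rewrite !comb_cons IH. Qed.

Lemma coords_finite (X : list R -> Prop) (J : seq nat) :
  (forall i, i \in J -> exists L, forall al, X al -> List.In (List.nth i al 0) L) ->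
  exists C, forall al, X al -> List.In (coords J al) C.
Proof.
elim: J => [|j J IH] finite; first by exists [:: [::]] => al _; left.
have [L jL] := finite j (mem_head _ _).
have [C JC] := IH (fun i iJ => finite i (mem_cons_tail _ iJ)).
exists (List.flat_map (fun v => List.map (cons v) C) L) => al Xal.
apply/List.in_flat_map; exists (List.nth j al 0); split; first exact: jL.
exact: List.in_map (JC _ Xal).
Qed.

Lemma size_undup_lt (A : eqType) (s t : seq A) x :
  {subset s <= t} -> x \in t -> x \notin s -> (size (undup s) < size (undup t))%N.
Proof.
move=> st xt xs; have xt' : x \in undup t by rewrite mem_undup.
have t_pos : (0 < size (undup t))%N by case: (undup t) xt'.
suff: (size (undup s) <= size (rem x (undup t)))%N by rewrite size_rem //; lia.
apply: uniq_leq_size (undup_uniq s) _ => y; rewrite mem_undup => ys.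
rewrite mem_rem_uniq ?undup_uniq // inE mem_undup (st _ ys) andbT.
by apply: contraNneq xs => <-.
Qed.

Section Ultrafilter.

Variables (T : Type) (U : classical_sets.set_system T).
Context {U_ultra : filter.UltraFilter U}.

Lemma U_and (A B : T -> Prop) : U A -> U B -> U (fun x => A x /\ B x).
Proof. exact: filter.filterI. Qed.

Lemma U_mono (A B : T -> Prop) : (forall x, A x -> B x) -> U A -> U B.
Proof. exact: filter.filterS. Qed.

Lemma U_ex (A : T -> Prop) : U A -> exists x, A x.
Proof. exact: filter.filter_ex. Qed.

Lemma U_or_not (A : T -> Prop) : U A \/ U (fun x => ~ A x).
Proof. exact: filter.in_ultra_setVsetC. Qed.

Lemma U_all (A : T -> Prop) : (forall x, A x) -> U A.
Proof. by move=> allA; apply: U_mono filter.filterT. Qed.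

Lemma U_all_in (J : seq nat) (Q : nat -> T -> Prop) :
  (forall i, i \in J -> U (Q i)) -> U (fun x => forall i, i \in J -> Q i x).
Proof.
elim: J => [|j J IH] UQ; first exact: U_all.
apply: U_mono (U_and (UQ j (mem_head _ _)) (IH (fun i iJ => UQ i (mem_cons_tail _ iJ)))).
by move=> x [Qj QJ] i; rewrite inE => /predU1P [->|/QJ].
Qed.

Definition ult (f g : T -> R) := U (fun x => f x < g x).
Definition ule (f g : T -> R) := U (fun x => f x <= g x).

Lemma ult_of_not_ule f g : ~ ule f g -> ult g f.
Proof.
move=> not_fg; case: (U_or_not (fun x => f x <= g x)) => // gf.
by apply: U_mono gf => x /Rnot_le_lt.
Qed.

Lemma ult_swo (A : Type) (h : A -> T -> R) :
  strict_weak_order (fun a b => ult (h a) (h b)).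
Proof.
split=> [a /U_ex [x]|a b c ab bc|a b c ab]; first lra.
  by apply: U_mono (U_and ab bc) => x []; lra.
case: (U_or_not (fun x => h a x < h c x)) => ac; [by left|right].
by apply: U_mono (U_and ab ac) => x []; lra.
Qed.

(* [stdpart f g] is the standard part of the quotient f / g in the ultrapower
   R^T / U. *)
Definition stdpart (f g : T -> R) : R :=
  epsilon (inhabits 0) (is_lub (fun t => ule (fun x => t * g x) f)).

Section StandardPart.

Variables f g : T -> R.
Hypotheses (g_pos : U (fun x => 0 < g x)) (f_ge0 : ule (fun _ => 0) f)
  (f_bounded : exists B, ule f (fun x => B * g x)).

Lemma stdpart_lub : is_lub (fun t => ule (fun x => t * g x) f) (stdpart f g).
Proof.
have bounded : bound (fun t => ule (fun x => t * g x) f).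
  have [B fB] := f_bounded; exists B => t tf.
  have [x [[tgf fBg] gx]] := U_ex (U_and (U_and tf fB) g_pos).
  by apply: Rmult_le_reg_r gx _; lra.
have zero_in : ule (fun x => 0 * g x) f by apply: U_mono f_ge0 => x; lra.
have [s s_lub] := completeness _ bounded (ex_intro _ 0 zero_in).
by apply: epsilon_spec; exists s.
Qed.

Lemma stdpart_ub t : ule (fun x => t * g x) f -> t <= stdpart f g.
Proof. exact: (proj1 stdpart_lub). Qed.

Lemma ule_stdpart t : t < stdpart f g -> ule (fun x => t * g x) f.
Proof.
move=> t_lt; apply: NNPP => not_tgf; suff: stdpart f g <= t by lra.
apply: (proj2 stdpart_lub) => s sgf; apply: Rnot_lt_le => ts; apply: not_tgf.
apply: U_mono (U_and sgf g_pos) => x [sgf_x gx].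
by have := Rmult_lt_compat_r _ _ _ gx ts; lra.
Qed.

Lemma ult_stdpart t : stdpart f g < t -> ult f (fun x => t * g x).
Proof. by move=> st_lt; apply: ult_of_not_ule => /stdpart_ub; lra. Qed.

End StandardPart.

Lemma dominant_index (P : nat -> T -> R) (J : seq nat) :
  J != [::] -> exists2 d, d \in J & forall i, i \in J -> ule (P i) (P d).
Proof.
elim: J => // j J IH _; have [->|/IH [d dJ d_dom]] := eqVneq J [::].
  by exists j; rewrite ?mem_head // => i; rewrite inE => /eqP ->; apply: U_all => x; lra.
case: (U_or_not (fun x => P d x <= P j x)) => [dj|jd].
  exists j; first exact: mem_head.
  move=> i; rewrite inE => /predU1P [->|/d_dom id]; first by apply: U_all => x; lra.
  by apply: U_mono (U_and id dj) => x []; lra.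
exists d; first exact: mem_cons_tail.
move=> i; rewrite inE => /predU1P [->|/d_dom //].
by apply: U_mono jd => x /Rnot_le_lt; lra.
Qed.

Lemma coef_sum_ge0 (J : seq nat) b :
  (forall i, i \in J -> 0 <= List.nth i b 0) -> 0 <= coef_sum J b.
Proof.
elim: J => [|j J IH] b_ge0; first by rewrite /coef_sum /=; lra.
have := b_ge0 j (mem_head _ _); have := IH (fun i iJ => b_ge0 i (mem_cons_tail _ iJ)).
by rewrite /coef_sum /= -/(coef_sum J b); lra.
Qed.

Lemma comb_negligible (P : nat -> T -> R) (J : seq nat) b d :
  (forall i, i \in J -> forall eps, 0 < eps -> ule (P i) (fun x => eps * P d x)) ->
  (forall i, i \in J -> 0 <= List.nth i b 0) -> U (fun x => 0 <= P d x) ->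
  forall eta, 0 < eta -> ule (comb P J b) (fun x => eta * P d x).
Proof.
move=> small b_ge0 Pd_ge0 eta eta_pos; have s_ge0 := coef_sum_ge0 b_ge0.
pose eps := eta / (coef_sum J b + 1).
have eps_pos : 0 < eps by apply: Rdiv_lt_0_compat; lra.
have s_eps : coef_sum J b * eps = eta - eps by rewrite /eps; field; lra.
apply: U_mono (U_and Pd_ge0 (U_all_in (fun i iJ => small i iJ eps eps_pos))).
move=> x [Pd_x small_x].
have := comb_le_coef_sum (fun i iJ => conj (b_ge0 i iJ) (small_x i iJ)).
have := Rmult_le_pos _ _ (Rlt_le _ _ eps_pos) Pd_x.
by rewrite -Rmult_assoc s_eps; lra.
Qed.

Section ExponentOrder.

Variables (k : nat) (P : nat -> T -> R) (cl : nat -> nat) (Supp : list R -> Prop).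
Hypotheses (P_pos : forall i, (i <= k)%N -> U (fun x => 0 < P i x))
  (P_comparable : forall i j, (i <= k)%N -> (j <= k)%N -> cl i = cl j ->
     exists2 r, 0 < r & ule (P j) (fun x => r * P i x))
  (Supp_ge0 : forall al, Supp al -> forall i, (i <= k)%N -> 0 <= List.nth i al 0)
  (Supp_natural : forall a, 0 < a -> forall i, (i <= k)%N ->
     exists L, forall al, Supp al -> List.nth i al 0 < a -> List.In (List.nth i al 0) L).

Definition comb_lt (J : seq nat) (a b : list R) := ult (comb P J a) (comb P J b).

Lemma comb_lt_nil a b : ~ comb_lt [::] a b.
Proof. by move=> /U_ex [x]; rewrite /comb /=; lra. Qed.

Section DominantIndex.

Variables (J : seq nat) (d : nat).
Hypotheses (J_le_k : forall i, i \in J -> (i <= k)%N) (d_in_J : d \in J)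
  (d_dom : forall i, i \in J -> ule (P i) (P d)).

(* [top_class] collects the indices with P i of the same order as P d; the
   others satisfy P i = o(P d). *)
Definition in_top_class i : bool :=
  boolp.asbool (exists2 K, 0 < K & ule (P d) (fun x => K * P i x)).

Definition top_class := filter in_top_class J.
Definition lower_classes := filter (predC in_top_class) J.

Lemma P_pos_le_dom : U (fun x => forall i, i \in J -> 0 < P i x /\ P i x <= P d x).
Proof.
apply: U_all_in => i iJ.
exact: U_mono (U_and (P_pos (J_le_k iJ)) (d_dom iJ)) => x.
Qed.

Lemma lower_negligible i : i \in lower_classes ->
  forall eps, 0 < eps -> ule (P i) (fun x => eps * P d x).
Proof.
rewrite mem_filter /= /in_top_class => /andP [/boolp.asboolPn not_top _] eps eps_pos.
have /ult_of_not_ule Pi_small : ~ ule (P d) (fun x => / eps * P i x).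
  by move=> Pd_le; apply: not_top; exists (/ eps) => //; apply: Rinv_0_lt_compat.
apply: U_mono Pi_small => x /(Rmult_lt_compat_l _ _ _ eps_pos).
by rewrite -Rmult_assoc Rinv_r; lra.
Qed.

Lemma top_class_lower_bound i : i \in top_class ->
  exists2 c, 0 < c & ule (fun x => c * P d x) (P i).
Proof.
rewrite mem_filter => /andP [/boolp.asboolP [K K_pos Pd_le] _].
have K_inv_pos := Rinv_0_lt_compat _ K_pos; exists (/ K) => //.
apply: U_mono Pd_le => x /(Rmult_le_compat_l _ _ _ (Rlt_le _ _ K_inv_pos)).
by rewrite -Rmult_assoc Rinv_l; lra.
Qed.

Lemma top_class_sub : {subset top_class <= J}.
Proof. exact: mem_subseq (filter_subseq _ _). Qed.

Lemma lower_classes_sub : {subset lower_classes <= J}.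
Proof. exact: mem_subseq (filter_subseq _ _). Qed.

Lemma comb_sub_ge_term (J' : seq nat) al x : {subset J' <= J} -> Supp al ->
  (forall i, i \in J -> 0 < P i x /\ P i x <= P d x) ->
  0 <= comb P J' al x /\ forall i, i \in J' -> List.nth i al 0 * P i x <= comb P J' al x.
Proof.
move=> J'J Sal dom_x; apply: comb_ge_term => i /J'J iJ.
by split; [exact: Supp_ge0 (J_le_k iJ)|have [] := dom_x i iJ; lra].
Qed.

Lemma comb_top_bounds al : Supp al ->
  ule (fun _ => 0) (comb P top_class al) /\
  exists B, ule (comb P top_class al) (fun x => B * P d x).
Proof.
move=> Sal; split; last exists (coef_sum top_class al).
all: apply: U_mono P_pos_le_dom => x dom_x.
  exact: (comb_sub_ge_term top_class_sub Sal dom_x).1.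
apply: comb_le_coef_sum => i /top_class_sub iJ.
by split; [exact: Supp_ge0 (J_le_k iJ)|case: (dom_x i iJ)].
Qed.

Lemma comb_split al x :
  comb P J al x = comb P top_class al x + comb P lower_classes al x.
Proof. exact: comb_filter. Qed.

Definition top_part al := stdpart (comb P top_class al) (P d).

Definition level al := ceil_nat (top_part al).

(* If the top part of [a] exceeded that of [b], the gap would dominate every
   contribution of the lower classes, which are o(P d). *)
Lemma top_part_mono a b : Supp a -> Supp b -> comb_lt J a b -> top_part a <= top_part b.
Proof.
move=> Sa Sb ab; apply: Rnot_lt_le => ba.
pose gap := (top_part a - top_part b) / 3.
have gap_pos : 0 < gap by rewrite /gap; lra.
have Pd_pos := P_pos (J_le_k d_in_J).
have [a_ge0 a_bdd] := comb_top_bounds Sa; have [b_ge0 b_bdd] := comb_top_bounds Sb.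
have a_big : ule (fun x => (top_part b + 2 * gap) * P d x) (comb P top_class a).
  by apply: ule_stdpart => //; rewrite -/(top_part a) /gap; lra.
have b_small : ult (comb P top_class b) (fun x => (top_part b + gap) * P d x).
  by apply: ult_stdpart => //; rewrite -/(top_part b); lra.
have b_lower := comb_negligible lower_negligible
  (fun i i_low => Supp_ge0 Sb (J_le_k (lower_classes_sub i_low)))
  (U_mono (fun x => @Rlt_le _ _) Pd_pos) gap_pos.
have [x [[[[abx ax] bx] bx_low] dom_x]] :=
  U_ex (U_and (U_and (U_and (U_and ab a_big) b_small) b_lower) P_pos_le_dom).
have [ax_low _] := comb_sub_ge_term lower_classes_sub Sa dom_x.
by move: abx; rewrite !comb_split; lra.
Qed.

Lemma top_coord_le i : i \in top_class ->
  exists2 c, 0 < c & forall al, Supp al -> List.nth i al 0 * c <= top_part al.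
Proof.
move=> i_top; have [c c_pos cPd] := top_class_lower_bound i_top.
exists c => // al Sal; have [al_ge0 al_bdd] := comb_top_bounds Sal.
have Pd_pos := P_pos (J_le_k d_in_J).
apply: stdpart_ub => //; apply: U_mono (U_and cPd P_pos_le_dom) => x [cPd_x dom_x].
have [_ term] := comb_sub_ge_term top_class_sub Sal dom_x.
have al_i := Supp_ge0 Sal (J_le_k (top_class_sub i_top)).
by have := term i i_top; have := Rmult_le_compat_l _ _ _ al_i cPd_x; lra.
Qed.

Lemma level_coords_finite n :
  exists C, forall al, Supp al /\ level al = n -> List.In (coords top_class al) C.
Proof.
apply: coords_finite => i i_top; have [c c_pos c_le] := top_coord_le i_top.
have [|L L_spec] := Supp_natural (a := (INR n + 1) / c) _ (J_le_k (top_class_sub i_top)).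
  by apply: Rdiv_lt_0_compat => //; have := pos_INR n; lra.
exists L => al [Sal lvl]; apply: L_spec => //.
apply: (Rmult_lt_reg_r c) => //; rewrite /Rdiv Rmult_assoc Rinv_l; last lra.
have := c_le al Sal; have := lt_ceil_nat (top_part al).
by rewrite -/(level al) lvl; lra.
Qed.

Lemma comb_lt_fiber a b :
  coords top_class a = coords top_class b -> comb_lt J a b -> comb_lt lower_classes a b.
Proof.
move=> ab_top; apply: U_mono => x.
by rewrite !comb_split (comb_coords _ x ab_top); lra.
Qed.

Lemma lower_classes_fewer :
  (size (undup (map cl lower_classes)) < size (undup (map cl J)))%N.
Proof.
apply: (size_undup_lt (x := cl d)); last 1 first.
- apply/mapP => -[i]; rewrite mem_filter /= => /andP [/negP not_top iJ] cl_eq.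
  apply/not_top/boolp.asboolP.
  exact: P_comparable (J_le_k iJ) (J_le_k d_in_J) (esym cl_eq).
- by move=> _ /mapP [i /lower_classes_sub iJ ->]; apply: map_f.
- exact: map_f.
Qed.

End DominantIndex.

Theorem comb_lt_lex_embeds c J X :
  (forall i, i \in J -> (i <= k)%N) -> (size (undup (map cl J)) <= c)%N ->
  (forall al, X al -> Supp al) -> lex_embeds (comb_lt J) X c.
Proof.
elim: c J X => [|c IH] J X J_le_k classes XS.
  suff -> : J = [::] by exists (fun _ => [::]); split=> // a b _ _ /comb_lt_nil.
  case: J classes {J_le_k} => // j J; rewrite leqn0 size_eq0 => /eqP undup0.
  by have := mem_undup (map cl (j :: J)) (cl j); rewrite undup0 in_nil /= in_cons eqxx.
have [->|J_nil] := eqVneq J [::].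
  exists (fun _ => List.repeat 0%N c.+1).
  by split=> [al _|a b _ _ /comb_lt_nil //]; exact: List.repeat_length.
have [d d_in_J d_dom] := dominant_index P J_nil.
apply: (lex_embeds_levels (lam := level J d)) => [a b Xa Xb ab|n].
  exact/ceil_nat_le/(top_part_mono J_le_k d_in_J d_dom (XS _ Xa) (XS _ Xb) ab).
have [C C_spec] := level_coords_finite J_le_k d_in_J d_dom n.
apply: (lex_embeds_bounded_fibers (ult_swo _) (g := coords (top_class J d)) _
  (fun al '(conj Xal lvl) => C_spec al (conj (XS _ Xal) lvl))) => v.
apply/lex_embeds_bounded_of/(lex_embeds_subrel (lt' := comb_lt (lower_classes J d))).
  by move=> a b [_ av] [_ bv]; apply: comb_lt_fiber; rewrite av bv.
apply: IH => [i /lower_classes_sub/J_le_k //||al [[/XS]]] //.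
by have := lower_classes_fewer J_le_k d_in_J; lia.
Qed.

End ExponentOrder.

End Ultrafilter.

Lemma mpow_shift (m : nat -> R -> R) j al x :
  mpow m j.+1 al x = mpow (fun i => m i.+1) j al x.
Proof. by elim: al j => [|a al IH] j //=; rewrite IH. Qed.

Lemma mpow_comb (m : nat -> R -> R) al x :
  mpow m 0 al x = exp (- comb (fun i x => - ln (m i x)) (iota 0 (length al)) al x).
Proof.
elim: al m => [|a al IH] m /=; first by rewrite /comb /= Ropp_0 exp_0.
rewrite comb_cons comb_shift mpow_shift IH /Rpower -exp_plus /=; congr exp; lra.
Qed.

#[local] Instance evt_proper : filter.ProperFilter evt.
Proof.
apply: filter.Build_ProperFilter_ex => [A [a Aa]|].
  by exists (a + 1); apply: Aa; lra.
split; first by exists 0.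
  move=> A B [a Aa] [b Bb]; exists (Rmax a b) => x /Rmax_Rlt [ax bx].
  by split; [exact: Aa|exact: Bb].
by move=> A B AB [a Aa]; exists a => x /Aa /AB.
Qed.

Lemma monomial_unit_interval M k m i :
  mult_vsubspace M -> gen_monomials M k m -> (i <= k)%N ->
  evt (fun x => 0 < m i x /\ m i x < 1).
Proof.
move=> [M_pos _] [m_gen _] ik; have [/M_pos [_ m_pos] m_small] := m_gen i ik.
apply: filter.filterS (filter.filterI m_pos (m_small 1 Rlt_0_1)) => x [pos].
by rewrite Rabs_pos_eq; lra.
Qed.

Lemma monomial_neg_ln_pos M k m i :
  mult_vsubspace M -> gen_monomials M k m -> (i <= k)%N ->
  evt (fun x => 0 < - ln (m i x)).
Proof.
move=> M_sub m_gen /(monomial_unit_interval M_sub m_gen); apply: filter.filterS.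
by move=> x [m_pos m_lt1]; have := ln_increasing _ _ m_pos m_lt1; rewrite ln_1; lra.
Qed.

Lemma comparable_monomials_neg_ln M k m i j :
  mult_vsubspace M -> gen_monomials M k m -> (i <= k)%N -> (j <= k)%N ->
  Defs.comparable (m i) (m j) ->
  exists2 r, 0 < r & evt (fun x => - ln (m j x) <= r * - ln (m i x)).
Proof.
move=> M_sub m_gen ik jk [r [s [r_pos [_ ij]]]]; exists r => //.
have mi := monomial_unit_interval M_sub m_gen ik.
have mj := monomial_unit_interval M_sub m_gen jk.
apply: filter.filterS (filter.filterI ij (filter.filterI mi mj)).
move=> x [[+ _] [[mi_pos _] [mj_pos _]]]; rewrite !Rabs_pos_eq; try lra.
by move=> /(ln_increasing _ _ (exp_pos _)); rewrite ln_exp; lra.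
Qed.

Lemma gen_power_series_support (K : comNzRingType) k (G : list R -> K) al :
  gen_power_series k G -> G al <> 0%R ->
  length al = k.+1 /\ forall i, (i <= k)%N -> 0 <= List.nth i al 0.
Proof.
move=> [W [W_wo W_supp]] /W_supp [al_len al_W]; split=> // i ik.
exact: (W_wo i ik).2 _ (al_W i ik).
Qed.

Lemma classes_count (cl : nat -> nat) k c :
  (forall i, (i <= k)%N -> (cl i < c)%N) -> (size (undup (map cl (iota 0 k.+1))) <= c)%N.
Proof.
move=> cl_lt; rewrite -(size_iota 0 c); apply: uniq_leq_size (undup_uniq _) _ => c'.
by rewrite mem_undup mem_iota => /mapP [i]; rewrite mem_iota => /andP [_ /cl_lt] ? ->.
Qed.

Lemma in_supp_exponent (K : comNzRingType) M m (G : list R -> K) :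
  exists alpha : (R -> R) -> list R, forall n, in_supp M m G n ->
    G (alpha n) <> 0%R /\ evt (fun x => mpow m 0 (alpha n) x = n x).
Proof.
apply: (choice (fun n al => in_supp M m G n ->
  G al <> 0%R /\ evt (fun x => mpow m 0 al x = n x))) => n.
have [[_ [[|al s] [_ [s_supp s_sum]]]]|not_supp] := classic (in_supp M m G n).
- by case: s_sum.
- by exists al => _; apply/s_supp; left.
- by exists nil.
Qed.

Theorem lemma5p5 (K : comNzRingType) (M : (R -> R) -> Prop) (k : nat)
    (m : nat -> R -> R) (G : list R -> K) (l : nat) :
  char0 K ->
  mult_vsubspace M ->
  gen_monomials M k m ->
  gen_power_series k G ->
  natural_support k G ->
  num_comp_classes k m (S l) ->
  exists phi : (R -> R) -> list nat,
    (forall n, in_supp M m G n -> List.length (phi n) = S l) /\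
    (forall n n', in_supp M m G n -> in_supp M m G n' ->
       evt (fun x => Rlt (n' x) (n x)) -> lexlt (phi n) (phi n')).
Proof.
move=> _ M_sub m_gen G_ps G_nat [cl [cl_lt [_ cl_cmp]]].
have [U [U_ultra evt_U]] := filter.ultraFilterLemma evt_proper.
pose P i x := - ln (m i x).
have P_pos i (ik : (i <= k)%N) : U (fun x => 0 < P i x).
  exact/evt_U/(monomial_neg_ln_pos M_sub m_gen ik).
have P_cmp i j (ik : (i <= k)%N) (jk : (j <= k)%N) : cl i = cl j ->
    exists2 r, 0 < r & ule U (P j) (fun x => r * P i x).
  move=> /(cl_cmp i j ik jk).2 /(comparable_monomials_neg_ln M_sub m_gen ik jk).
  by case=> r r_pos /evt_U; exists r.
have J_le_k i : i \in iota 0 k.+1 -> (i <= k)%N by rewrite mem_iota ltnS => /andP [].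
have [phi [phi_len phi_lt]] := comb_lt_lex_embeds P_pos P_cmp
  (fun al G_al => (gen_power_series_support G_ps G_al).2) G_nat
  (X := fun al => G al <> 0%R) J_le_k (classes_count cl_lt) (fun _ h => h).
have [alpha alphaP] := in_supp_exponent M m G.
exists (fun n => phi (alpha n)); split=> [n /alphaP [G_n _]|n n' /alphaP [G_n n_eq]].
  exact: phi_len.
move=> /alphaP [G_n' n'_eq] n'_lt; apply: phi_lt => //; apply: evt_U.
apply: filter.filterS (filter.filterI n'_lt (filter.filterI n_eq n'_eq)).
move=> x [lt [n_x n'_x]]; move: lt; rewrite -n_x -n'_x !mpow_comb.
rewrite (gen_power_series_support G_ps G_n).1 (gen_power_series_support G_ps G_n').1.
by move=> /exp_lt_inv; rewrite /P; lra.
Qed.
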